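(* In the setting described in the context, define $$Z_0=\big\|\boldsymbol{\Pi}^{\le 2N}-\boldsymbol{\Pi}^{\le 3N}B\big(I+Dg^N(\overline{\mathbf{U}})l^{-1}\big)\boldsymbol{\Pi}^{\le 2N}\big\|_2,$$ $$Z_{1,1}=\Big(\tfrac{\mathscr{l}_{22}}{\mathscr{l}_{den}}\Big)_{2N}\|V_1^N\|_1+\Big(\tfrac{\mathscr{l}_{21}}{\mathscr{l}_{den}}\Big)_{2N}\|V_2^N\|_1,\qquad Z_{1,2}=\Big(\tfrac{\mathscr{l}_{12}}{\mathscr{l}_{den}}\Big)_{2N}\|V_1^N\|_1+\Big(\tfrac{\mathscr{l}_{11}}{\mathscr{l}_{den}}\Big)_{2N}\|V_2^N\|_1,$$ where $\big(\tfrac{\mathscr{l}_{ij}}{\mathscr{l}_{den}}\big)_{2N}=\sup_{n\in\mathbb{N}_0,\,n>2N}\big|\tfrac{\mathscr{l}_{ij}(\tilde n)}{\mathscr{l}_{den}(\tilde n)}\big|$, and let $Z_1=\sqrt{Z_0^2+2Z_{1,1}^2+2Z_{1,2}^2}$. Then $$\big\|I-B\big(I+Dg^N(\overline{\mathbf{U}})l^{-1}\big)\big\|_2\le Z_1.$$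
   Context: Parameters: $\nu>0$, $\nu_1,\dots,\nu_5\in\mathbb{R}$; $\mathscr{l}(\xi)=\begin{bmatrix}\mathscr{l}_{11}(\xi)&\mathscr{l}_{12}(\xi)\\ \mathscr{l}_{21}(\xi)&\mathscr{l}_{22}(\xi)\end{bmatrix}=\begin{bmatrix}-\nu|2\pi\xi|^2+\nu_1&\nu_2\\ \nu_3&-|2\pi\xi|^2-\nu_2\end{bmatrix}$ is assumed invertible for every $\xi\in\mathbb{R}$, and $\mathscr{l}_{den}(\xi)=\det\mathscr{l}(\xi)$. Periodic setting: $d\ge1$, $\Omega_0=(-d,d)$, $|\Omega_0|=2d$, $\tilde n=n/(2d)$, $\mathbb{N}_0=\{0,1,\dots\}$, $\alpha_0=1$, $\alpha_n=2$ ($n\ge1$); $\ell^p(\mathbb{N}_0)$ has norm $\|U\|_p=(\sum_n\alpha_n|u_n|^p)^{1/p}$; $\ell^2_e=\ell^2(\mathbb{N}_0)^2$ with $\|\mathbf{U}\|_2=(\|U_1\|_2^2+\|U_2\|_2^2)^{1/2}$, and $\|\cdot\|_2$ of an operator on $\ell^2_e$ is the induced operator norm. $\gamma(u)_n=\frac1{|\Omega_0|}\int_{\Omega_0}u(x)e^{-2\pi i\tilde nx}dx$ for even $u\in L^2(\mathbb{R})$, $\gamma^\dagger(U)(x)=\mathbb{1}_{\Omega_0}(x)\sum_n\alpha_nu_n\cos(2\pi\tilde nx)$; bold versions act componentwise on pairs. $U*V=\gamma(\gamma^\dagger(U)\gamma^\dagger(V))$. $\Pi^{\le M}$ keeps coefficients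 with $n\le M$ and zeroes the others, $\Pi^{>M}=I-\Pi^{\le M}$, bold versions componentwise. $l$ acts on $\ell^2_e$ by $(l\mathbf{U})_n=\mathscr{l}(\tilde n)\mathbf{u}_n$ with $\mathbf{u}_n=((U_1)_n,(U_2)_n)$. Approximate objects: $N_0,N\in\mathbb{N}$; $\overline{\mathbf{U}}\in\ell^2_e$ with $\overline{\mathbf{U}}=\boldsymbol{\Pi}^{\le N_0}\overline{\mathbf{U}}$, $\overline{\mathbf{u}}=(\overline u_1,\overline u_2)=\boldsymbol{\gamma}^\dagger(\overline{\mathbf{U}})$. $B^N$ is a bounded operator on $\ell^2_e$ with $B^N=\boldsymbol{\Pi}^{\le N}B^N\boldsymbol{\Pi}^{\le N}$ and $B=\boldsymbol{\Pi}^{>N}+B^N$. Let $v_1=2\overline u_1\overline u_2+2\nu_4\overline u_1+\nu_5\overline u_2$, $v_2=\overline u_1^2+\nu_5\overline u_1$, $V_i^N=\Pi^{\le N}\gamma(v_i)$, $\mathbb{V}_i^N:W\mapsto V_i^N*W$, and $Dg^N(\overline{\mathbf{U}})=\begin{bmatrix}\mathbb{V}_1^N&\mathbb{V}_2^N\\-\mathbb{V}_1^N&-\mathbb{V}_2^N\end{bmatrix}$. *)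

From HB Require Import structures.
From mathcomp Require Import all_boot all_order all_algebra.
From mathcomp Require Import all_classical all_reals all_analysis.
Set Implicit Arguments. Unset Strict Implicit. Unset Printing Implicit Defensive.
Import Order.TTheory GRing.Theory Num.Theory.
Import numFieldNormedType.Exports.
Local Open Scope classical_set_scope.
Local Open Scope ring_scope.
Local Open Scope big_scope.

Section Defs.
Variable R : realType.

(* sequences indexed by N_0, and pairs of them (elements of l^2_e) *)
Definition sq := nat -> R.
Definition sq2 := (sq * sq)%type.

Definition alpha (n : nat) : R := if n == 0%N then 1 else 2.

Definition tl (d : R) (n : nat) : R := n%:R / (2 * d).

Definition rsum (f : nat -> R) : R := limn (series f : R^nat).

Definition in_l2 (U : sq) : Prop := cvgn (series (fun n => alpha n * U n ^+ 2) : R^nat).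
Definition norm2 (U : sq) : R := Num.sqrt (rsum (fun n => alpha n * U n ^+ 2)).
Definition norm1 (U : sq) : R := rsum (fun n => alpha n * `|U n|).
Definition in_l2e (W : sq2) : Prop := in_l2 W.1 /\ in_l2 W.2.
Definition norm2e (W : sq2) : R := Num.sqrt (norm2 W.1 ^+ 2 + norm2 W.2 ^+ 2).

Definition opnorm (T : sq2 -> sq2) : R :=
  sup [set norm2e (T W) | W in [set W | in_l2e W /\ norm2e W <= 1]].

Definition PiLe (M : nat) (U : sq) : sq := fun n => if (n <= M)%N then U n else 0.
Definition PiGt (M : nat) (U : sq) : sq := fun n => if (M < n)%N then U n else 0.
Definition PiLeE (M : nat) (W : sq2) : sq2 := (PiLe M W.1, PiLe M W.2).
Definition PiGtE (M : nat) (W : sq2) : sq2 := (PiGt M W.1, PiGt M W.2).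

Definition addE (W W' : sq2) : sq2 := (fun n => W.1 n + W'.1 n, fun n => W.2 n + W'.2 n).
Definition subE (W W' : sq2) : sq2 := (fun n => W.1 n - W'.1 n, fun n => W.2 n - W'.2 n).
Definition scaleE (a : R) (W : sq2) : sq2 := (fun n => a * W.1 n, fun n => a * W.2 n).

Definition l11 (nu nu1 : R) (xi : R) : R := - nu * (2 * pi * xi) ^+ 2 + nu1.
Definition l12 (nu2 : R) (xi : R) : R := nu2.
Definition l21 (nu3 : R) (xi : R) : R := nu3.
Definition l22 (nu2 : R) (xi : R) : R := - (2 * pi * xi) ^+ 2 - nu2.
Definition lden (nu nu1 nu2 nu3 : R) (xi : R) : R :=
  l11 nu nu1 xi * l22 nu2 xi - l12 nu2 xi * l21 nu3 xi.

(* l^{-1} acting on l^2_e: (l^{-1} W)_n = l(\tilde n)^{-1} w_n (2x2 inverse) *)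
Definition linv (d nu nu1 nu2 nu3 : R) (W : sq2) : sq2 :=
  (fun n => (l22 nu2 (tl d n) * W.1 n - l12 nu2 (tl d n) * W.2 n)
              / lden nu nu1 nu2 nu3 (tl d n),
   fun n => (- l21 nu3 (tl d n) * W.1 n + l11 nu nu1 (tl d n) * W.2 n)
              / lden nu nu1 nu2 nu3 (tl d n)).

(* gamma (for even u : cosine coefficients on Omega_0 = (-d,d)) *)
Definition gamma (d : R) (u : R -> R) : sq :=
  fun n => (2 * d)^-1 *
    (\int[lebesgue_measure]_(x in `]- d, d[) (u x * cos (2 * pi * tl d n * x)))%R.

Definition gammad (d : R) (U : sq) : R -> R :=
  fun x => if (- d < x) && (x < d) then
             rsum (fun n => alpha n * U n * cos (2 * pi * tl d n * x))
           else 0.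

(* discrete convolution U * W = gamma(gamma^dagger U gamma^dagger W),
   written as the sum over k in Z of u_{|k|} w_{|n-k|} *)
Definition distn (m k : nat) : nat := ((m - k) + (k - m))%N.
Definition conv (U W : sq) : sq :=
  fun n => rsum (fun k => U k * W (distn n k))
         + rsum (fun k => U k.+1 * W (n + k.+1)%N).

Definition v1 (d nu4 nu5 : R) (Ub : sq2) : R -> R :=
  fun x => 2 * gammad d Ub.1 x * gammad d Ub.2 x
           + 2 * nu4 * gammad d Ub.1 x + nu5 * gammad d Ub.2 x.
Definition v2 (d nu5 : R) (Ub : sq2) : R -> R :=
  fun x => gammad d Ub.1 x ^+ 2 + nu5 * gammad d Ub.1 x.
Definition V1N (d nu4 nu5 : R) (N : nat) (Ub : sq2) : sq := PiLe N (gamma d (v1 d nu4 nu5 Ub)).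
Definition V2N (d nu5 : R) (N : nat) (Ub : sq2) : sq := PiLe N (gamma d (v2 d nu5 Ub)).

Definition DgN (V1 V2 : sq) (W : sq2) : sq2 :=
  (fun n => conv V1 W.1 n + conv V2 W.2 n,
   fun n => - (conv V1 W.1 n + conv V2 W.2 n)).

Definition Bop (N : nat) (BN : sq2 -> sq2) (W : sq2) : sq2 := addE (PiGtE N W) (BN W).

Definition supq (d : R) (N : nat) (f : R -> R) : R :=
  sup [set `|f (tl d n)| | n in [set n : nat | (2 * N < n)%N]].

End Defs.

From Pilot Require Import Defs.
From HB Require Import structures.
From mathcomp Require Import all_boot all_order all_algebra.
From mathcomp Require Import all_classical all_reals all_analysis.
From mathcomp Require Import ring lra zify.
Set Implicit Arguments. Unset Strict Implicit. Unset Printing Implicit Defensive.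
Import Order.TTheory GRing.Theory Num.Theory.
Import numFieldNormedType.Exports.
Local Open Scope classical_set_scope.
Local Open Scope ring_scope.

(* Split W into its head Pi^{<=2N} W and its tail Pi^{>2N} W. Since B^N only reads and
   writes coefficients of index <= N, and convolution with V_i^N moves supports by at
   most N, W - A W is the Z0-operator applied to W minus Dg^N l^{-1} applied to the tail.
   The first term is at most Z0 |head|. On the tail, l^{-1} is diagonal with entries
   bounded by the suprema (l_ij / l_den)_{2N}, and Young's inequality
   |V * U|_2 <= |V|_1 |U|_2 bounds the convolution, which gives
   sqrt 2 (Z11 |tail_1| + Z12 |tail_2|). Cauchy-Schwarz in R^3 together with
   |W|^2 = |head|^2 + |tail_1|^2 + |tail_2|^2 yields the bound Z1 |W|. All suprema
   involved are finite because l_den grows like nu (2 pi xi)^4 whereas the entries of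
   l grow at most like (2 pi xi)^2. *)

Section FiniteSums.
Variable R : realType.

Lemma abs_le_of_sqr (x y : R) : 0 <= y -> x ^+ 2 <= y ^+ 2 -> `|x| <= y.
Proof. by move=> y0; rewrite -real_normK ?num_real // ler_pXn2r ?nnegrE. Qed.

Lemma sqr_le_of_abs_le (x y : R) : `|x| <= y -> x ^+ 2 <= y ^+ 2.
Proof.
move=> h; have y0 : 0 <= y by apply: le_trans h.
by rewrite -real_normK ?num_real // ler_pXn2r ?nnegrE.
Qed.

Lemma sqr_le_of_sqrt (a b : R) : 0 <= a -> 0 <= b -> Num.sqrt a <= b -> a <= b ^+ 2.
Proof. by move=> a0 b0 h; rewrite -(sqr_sqrtr a0) ler_pXn2r ?nnegrE ?sqrtr_ge0. Qed.

Lemma cauchy_schwarz_step (A B C p q x : R) : 0 <= A -> 0 <= B -> 0 <= p -> 0 <= q ->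
  C ^+ 2 <= A * B -> x ^+ 2 <= p * q -> (C + x) ^+ 2 <= (A + p) * (B + q).
Proof.
move=> A0 B0 p0 q0 hC hx.
have hCx : `|C * x| <= Num.sqrt (A * q) * Num.sqrt (B * p).
  apply: abs_le_of_sqr; first by rewrite mulr_ge0 ?sqrtr_ge0.
  rewrite !exprMn !sqr_sqrtr ?mulr_ge0 // (_ : A * q * (B * p) = A * B * (p * q)); last by ring.
  by rewrite ler_pM ?sqr_ge0.
have amgm : 2 * (Num.sqrt (A * q) * Num.sqrt (B * p)) <= A * q + B * p.
  set s := Num.sqrt (A * q); set t := Num.sqrt (B * p).
  have -> : A * q = s ^+ 2 by rewrite sqr_sqrtr ?mulr_ge0.
  have -> : B * p = t ^+ 2 by rewrite sqr_sqrtr ?mulr_ge0.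
  by rewrite -subr_ge0 (_ : _ - _ = (s - t) ^+ 2) ?sqr_ge0 //; ring.
have := ler_norm (C * x); lra.
Qed.

Lemma cauchy_schwarz_sum (M : nat) (x p q : nat -> R) :
  (forall i, 0 <= p i) -> (forall i, 0 <= q i) -> (forall i, x i ^+ 2 <= p i * q i) ->
  (\sum_(i < M) x i) ^+ 2 <= (\sum_(i < M) p i) * (\sum_(i < M) q i).
Proof.
move=> hp hq hx; elim: M => [|M IH]; first by rewrite !big_ord0 expr0n mul0r.
by rewrite !big_ord_recr /=; apply: cauchy_schwarz_step; rewrite ?sumr_ge0.
Qed.

Lemma cauchy_schwarz3 (u1 u2 u3 v1 v2 v3 : R) :
  u1 * v1 + u2 * v2 + u3 * v3 <=
  Num.sqrt (u1 ^+ 2 + u2 ^+ 2 + u3 ^+ 2) * Num.sqrt (v1 ^+ 2 + v2 ^+ 2 + v3 ^+ 2).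
Proof.
apply: le_trans (ler_norm _) _; apply: abs_le_of_sqr; first by rewrite mulr_ge0 ?sqrtr_ge0.
rewrite exprMn !sqr_sqrtr ?addr_ge0 ?sqr_ge0 // -subr_ge0.
rewrite (_ : _ - _ = (u1 * v2 - u2 * v1) ^+ 2 + (u1 * v3 - u3 * v1) ^+ 2
                     + (u2 * v3 - u3 * v2) ^+ 2); last by ring.
by rewrite !addr_ge0 ?sqr_ge0.
Qed.

Lemma minkowski2 (a1 a2 b1 b2 : R) :
  Num.sqrt ((a1 + b1) ^+ 2 + (a2 + b2) ^+ 2)
  <= Num.sqrt (a1 ^+ 2 + a2 ^+ 2) + Num.sqrt (b1 ^+ 2 + b2 ^+ 2).
Proof.
have := cauchy_schwarz3 a1 a2 0 b1 b2 0; rewrite !expr0n /= !mulr0 !addr0 => cs.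
rewrite -(ler_pXn2r (n := 2)) ?nnegrE ?sqrtr_ge0 ?addr_ge0 //.
rewrite [leRHS]sqrrD !sqr_sqrtr ?addr_ge0 ?sqr_ge0 // mulr2n.
rewrite (_ : _ + _ = a1 ^+ 2 + a2 ^+ 2 + (b1 ^+ 2 + b2 ^+ 2) + 2 * (a1 * b1 + a2 * b2)); last by ring.
lra.
Qed.

End FiniteSums.

Section WeightedL2.
Variable R : realType.
Implicit Types (U V Z : sq R) (W X Y : sq2 R).

Definition sqsum U (M : nat) : R := \sum_(n < M) alpha R n * U n ^+ 2.

Lemma alpha_ge0 n : 0 <= alpha R n.
Proof. by rewrite /alpha; case: ifP. Qed.

Lemma sqsum_ge0 U M : 0 <= sqsum U M.
Proof. by apply: sumr_ge0 => n _; rewrite mulr_ge0 ?alpha_ge0 ?sqr_ge0. Qed.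

Lemma series_sqsum U : series (fun n => alpha R n * U n ^+ 2) = sqsum U.
Proof. by apply/funext => M; rewrite /series /= big_mkord. Qed.

Lemma sqsum_nondecreasing U : {homo sqsum U : m n / (m <= n)%N >-> m <= n}.
Proof.
move=> m n mn; rewrite -series_sqsum.
by apply: (nondecreasing_series (P := xpredT)) => // k _ _; rewrite mulr_ge0 ?alpha_ge0 ?sqr_ge0.
Qed.

Lemma norm2_ge0 U : 0 <= norm2 U.
Proof. exact: sqrtr_ge0. Qed.

Lemma norm2e_ge0 W : 0 <= norm2e W.
Proof. exact: sqrtr_ge0. Qed.

Lemma sqsum_le_lim U M : in_l2 U -> sqsum U M <= limn (sqsum U).
Proof.
rewrite /in_l2 series_sqsum => cU.
by apply: nondecreasing_cvgn_le => //; exact: sqsum_nondecreasing.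
Qed.

Lemma norm2_sqr U : in_l2 U -> norm2 U ^+ 2 = limn (sqsum U).
Proof.
move=> hU; rewrite /norm2 /rsum series_sqsum sqr_sqrtr //.
by apply: le_trans (sqsum_ge0 U 0) (sqsum_le_lim 0 hU).
Qed.

Lemma sqsum_le_norm2 U M : in_l2 U -> sqsum U M <= norm2 U ^+ 2.
Proof. by move=> hU; rewrite norm2_sqr // sqsum_le_lim. Qed.

Lemma l2_sqsum_le U B : 0 <= B -> (forall M, sqsum U M <= B ^+ 2) ->
  in_l2 U /\ norm2 U <= B.
Proof.
move=> B0 hB; have cU : cvgn (sqsum U).
  apply: nondecreasing_is_cvgn; first exact: sqsum_nondecreasing.
  by exists (B ^+ 2) => _ [M _ <-].
have hU : in_l2 U by rewrite /in_l2 series_sqsum.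
split => //; rewrite -(ler_pXn2r (n := 2)) ?nnegrE ?norm2_ge0 // norm2_sqr //.
by apply: limr_le => //; apply: nearW.
Qed.

Lemma norm2_sqrD U V Z : in_l2 U -> in_l2 V ->
  (forall n, Z n ^+ 2 = U n ^+ 2 + V n ^+ 2) ->
  norm2 Z ^+ 2 = norm2 U ^+ 2 + norm2 V ^+ 2.
Proof.
rewrite /in_l2 !series_sqsum => cU cV hZ.
have eZ : sqsum Z = sqsum U \+ sqsum V.
  by apply/funext => M /=; rewrite /sqsum -big_split; apply: eq_bigr => n _; rewrite hZ mulrDr.
have lZ : sqsum Z @ \oo --> limn (sqsum U) + limn (sqsum V) by rewrite eZ; exact: cvgD.
have cZ : cvgn (sqsum Z) by apply/cvg_ex; exists (limn (sqsum U) + limn (sqsum V)).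
by rewrite !norm2_sqr ?/in_l2 ?series_sqsum //; exact: cvg_lim.
Qed.

Lemma sqsum_combination_le (a b : R) U V Z M : 0 <= a -> 0 <= b ->
  (forall n, `|Z n| <= a * `|U n| + b * `|V n|) ->
  Num.sqrt (sqsum Z M) <= a * Num.sqrt (sqsum U M) + b * Num.sqrt (sqsum V M).
Proof.
move=> a0 b0 hZ; set s := Num.sqrt (sqsum U M); set t := Num.sqrt (sqsum V M).
set c := \sum_(n < M) alpha R n * (`|U n| * `|V n|).
have ec : c <= s * t.
  apply: le_trans (ler_norm c) _; apply: abs_le_of_sqr; first by rewrite mulr_ge0 ?sqrtr_ge0.
  rewrite exprMn !sqr_sqrtr ?sqsum_ge0 // /c /sqsum.
  apply: (@cauchy_schwarz_sum R M (fun n => alpha R n * (`|U n| * `|V n|))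
    (fun n => alpha R n * U n ^+ 2) (fun n => alpha R n * V n ^+ 2)) => n.
  - by rewrite mulr_ge0 ?alpha_ge0 ?sqr_ge0.
  - by rewrite mulr_ge0 ?alpha_ge0 ?sqr_ge0.
  - by rewrite !exprMn !real_normK ?num_real // le_eqVlt (_ : _ == _) //; apply/eqP; ring.
have eZ : sqsum Z M <= a ^+ 2 * sqsum U M + b ^+ 2 * sqsum V M + 2 * a * b * c.
  rewrite /sqsum /c !mulr_sumr -!big_split; apply: ler_sum => n _ /=.
  apply: le_trans (ler_wpM2l (alpha_ge0 n) (sqr_le_of_abs_le (hZ n))) _.
  rewrite -(real_normK (num_real (U n))) -(real_normK (num_real (V n))).
  by rewrite le_eqVlt (_ : _ == _) //; apply/eqP; ring.
rewrite -(ler_pXn2r (n := 2)) ?nnegrE ?sqrtr_ge0 ?addr_ge0 ?mulr_ge0 ?sqrtr_ge0 //.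
rewrite sqr_sqrtr ?sqsum_ge0 //; apply: le_trans eZ _.
have -> : (a * s + b * t) ^+ 2 = a ^+ 2 * s ^+ 2 + b ^+ 2 * t ^+ 2 + 2 * a * b * (s * t) by ring.
by rewrite !sqr_sqrtr ?sqsum_ge0 // lerD2l ler_wpM2l ?mulr_ge0.
Qed.

Lemma l2_combination_le (a b : R) U V Z : 0 <= a -> 0 <= b -> in_l2 U -> in_l2 V ->
  (forall n, `|Z n| <= a * `|U n| + b * `|V n|) ->
  in_l2 Z /\ norm2 Z <= a * norm2 U + b * norm2 V.
Proof.
move=> a0 b0 hU hV hZ; apply: l2_sqsum_le; first by rewrite addr_ge0 ?mulr_ge0 ?norm2_ge0.
move=> M; apply: sqr_le_of_sqrt; rewrite ?sqsum_ge0 ?addr_ge0 ?mulr_ge0 ?norm2_ge0 //.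
apply: le_trans (sqsum_combination_le M a0 b0 hZ) _.
by apply: lerD; apply: ler_wpM2l => //; rewrite -ler_sqr ?nnegrE ?sqrtr_ge0 ?norm2_ge0 //
  sqr_sqrtr ?sqsum_ge0 // sqsum_le_norm2.
Qed.

Lemma l2_scale_le (c : R) U Z : 0 <= c -> in_l2 U -> (forall n, `|Z n| <= c * `|U n|) ->
  in_l2 Z /\ norm2 Z <= c * norm2 U.
Proof.
move=> c0 hU hZ; have [] := @l2_combination_le c 0 U U Z c0 (lexx 0) hU hU.
  by move=> n; rewrite mul0r addr0.
by rewrite mul0r addr0.
Qed.

Lemma norm2e_sqr W : norm2e W ^+ 2 = norm2 W.1 ^+ 2 + norm2 W.2 ^+ 2.
Proof. by rewrite sqr_sqrtr // addr_ge0 ?sqr_ge0. Qed.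

Lemma norm2_le_norm2e W : norm2 W.1 <= norm2e W /\ norm2 W.2 <= norm2e W.
Proof.
by split; rewrite -ler_sqr ?nnegrE ?norm2_ge0 ?norm2e_ge0 // norm2e_sqr ?lerDl ?lerDr sqr_ge0.
Qed.

Lemma norm2e_le W (a b : R) : norm2 W.1 <= a -> norm2 W.2 <= b ->
  norm2e W <= Num.sqrt (a ^+ 2 + b ^+ 2).
Proof.
move=> ha hb; rewrite ler_sqrt ?addr_ge0 ?sqr_ge0 //.
by apply: lerD; apply: sqr_le_of_abs_le; rewrite ger0_norm ?norm2_ge0.
Qed.

Lemma norm2e_le_sqrt2 W (c : R) : norm2 W.1 <= c -> norm2 W.2 <= c ->
  norm2e W <= Num.sqrt 2 * c.
Proof.
move=> h1 h2; have c0 : 0 <= c := le_trans (norm2_ge0 _) h1.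
apply: le_trans (norm2e_le h1 h2) _.
rewrite (_ : c ^+ 2 + c ^+ 2 = 2 * c ^+ 2); last by ring.
by rewrite sqrtrM // sqrtr_sqr ger0_norm.
Qed.

Lemma l2e_triangle X Y W : in_l2e X -> in_l2e Y ->
  (forall n, `|W.1 n| <= `|X.1 n| + `|Y.1 n|) -> (forall n, `|W.2 n| <= `|X.2 n| + `|Y.2 n|) ->
  in_l2e W /\ norm2e W <= norm2e X + norm2e Y.
Proof.
move=> [hX1 hX2] [hY1 hY2] hW1 hW2.
have [hW1' n1] : in_l2 W.1 /\ norm2 W.1 <= 1 * norm2 X.1 + 1 * norm2 Y.1.
  by apply: l2_combination_le => // n; rewrite !mul1r.
have [hW2' n2] : in_l2 W.2 /\ norm2 W.2 <= 1 * norm2 X.2 + 1 * norm2 Y.2.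
  by apply: l2_combination_le => // n; rewrite !mul1r.
rewrite !mul1r in n1 n2; split => //.
exact: le_trans (norm2e_le n1 n2) (minkowski2 _ _ _ _).
Qed.

Lemma l2e_scale_le (c : R) X W : 0 <= c -> in_l2e X ->
  (forall n, `|W.1 n| <= c * `|X.1 n|) -> (forall n, `|W.2 n| <= c * `|X.2 n|) ->
  in_l2e W /\ norm2e W <= c * norm2e X.
Proof.
move=> c0 [hX1 hX2] hW1 hW2.
have [hW1' n1] := l2_scale_le c0 hX1 hW1; have [hW2' n2] := l2_scale_le c0 hX2 hW2.
split => //; apply: le_trans (norm2e_le n1 n2) _.
by rewrite !exprMn -mulrDr sqrtrM ?sqr_ge0 // sqrtr_sqr ger0_norm.
Qed.

End WeightedL2.

Section Operators.
Variable R : realType.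
Implicit Types (X Y W : sq2 R) (T S : sq2 R -> sq2 R).

Lemma sq2_ext X Y : X.1 =1 Y.1 -> X.2 =1 Y.2 -> X = Y.
Proof. by case: X Y => [x1 x2] [y1 y2] /= /funext -> /funext ->. Qed.

Lemma sq2_extP X Y : (forall n, X.1 n = Y.1 n /\ X.2 n = Y.2 n) -> X = Y.
Proof. by move=> h; apply: sq2_ext => n; case: (h n). Qed.

Lemma l2e_addE X Y : in_l2e X -> in_l2e Y ->
  in_l2e (addE X Y) /\ norm2e (addE X Y) <= norm2e X + norm2e Y.
Proof. by move=> hX hY; apply: l2e_triangle => // n; apply: ler_normD. Qed.

Lemma l2e_subE X Y : in_l2e X -> in_l2e Y ->
  in_l2e (subE X Y) /\ norm2e (subE X Y) <= norm2e X + norm2e Y.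
Proof. by move=> hX hY; apply: l2e_triangle => // n; apply: ler_normB. Qed.

Lemma l2e_scaleE (a : R) X : in_l2e X ->
  in_l2e (scaleE a X) /\ norm2e (scaleE a X) <= `|a| * norm2e X.
Proof. by move=> hX; apply: l2e_scale_le => // n; rewrite normrM. Qed.

Lemma l2e_PiLeE M X : in_l2e X -> in_l2e (PiLeE M X) /\ norm2e (PiLeE M X) <= norm2e X.
Proof.
move=> hX; suff : in_l2e (PiLeE M X) /\ norm2e (PiLeE M X) <= 1 * norm2e X by rewrite mul1r.
by apply: l2e_scale_le => // n; rewrite mul1r /= /PiLe; case: ifP; rewrite ?normr0.
Qed.

Lemma l2e_PiGtE M X : in_l2e X -> in_l2e (PiGtE M X) /\ norm2e (PiGtE M X) <= norm2e X.
Proof.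
move=> hX; suff : in_l2e (PiGtE M X) /\ norm2e (PiGtE M X) <= 1 * norm2e X by rewrite mul1r.
by apply: l2e_scale_le => // n; rewrite mul1r /= /PiGt; case: ifP; rewrite ?normr0.
Qed.

Lemma norm2e_PiLeE_PiGtE M X : in_l2e X ->
  norm2e X ^+ 2 = norm2e (PiLeE M X) ^+ 2 + norm2e (PiGtE M X) ^+ 2.
Proof.
have split_sqr (U : sq R) n : U n ^+ 2 = PiLe M U n ^+ 2 + PiGt M U n ^+ 2.
  by rewrite /PiLe /PiGt ltnNge; case: ifP; rewrite expr0n ?addr0 ?add0r.
move=> hX; have [[hL1 hL2] _] := l2e_PiLeE M hX; have [[hG1 hG2] _] := l2e_PiGtE M hX.
have e1 := norm2_sqrD hL1 hG1 (split_sqr X.1).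
have e2 := norm2_sqrD hL2 hG2 (split_sqr X.2).
by rewrite !norm2e_sqr e1 e2 /=; ring.
Qed.

Definition bounded_op T : Prop :=
  (forall X, in_l2e X -> in_l2e (T X)) /\
  exists2 K, 0 <= K & forall X, in_l2e X -> norm2e (T X) <= K * norm2e X.

Lemma bounded_opP T (K : R) : 0 <= K ->
  (forall X, in_l2e X -> in_l2e (T X) /\ norm2e (T X) <= K * norm2e X) -> bounded_op T.
Proof. by move=> K0 hT; split; [move=> X /hT [] | exists K => // X /hT []]. Qed.

Lemma bounded_op_id : bounded_op id.
Proof. by apply: (bounded_opP ler01) => X hX; rewrite mul1r. Qed.

Lemma bounded_op_comp T S : bounded_op T -> bounded_op S -> bounded_op (T \o S).
Proof.
move=> [hT [K K0 nT]] [hS [L L0 nS]]; apply: (bounded_opP (mulr_ge0 K0 L0)) => X hX.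
split; first exact/hT/hS.
by apply: le_trans (nT _ (hS _ hX)) _; rewrite -mulrA ler_wpM2l // nS.
Qed.

Lemma bounded_op_addE T S : bounded_op T -> bounded_op S -> bounded_op (fun X => addE (T X) (S X)).
Proof.
move=> [hT [K K0 nT]] [hS [L L0 nS]]; apply: (bounded_opP (addr_ge0 K0 L0)) => X hX.
have [hTS nTS] := l2e_addE (hT _ hX) (hS _ hX); split => //.
by apply: le_trans nTS _; rewrite mulrDl; apply: lerD; [exact: nT | exact: nS].
Qed.

Lemma bounded_op_subE T S : bounded_op T -> bounded_op S -> bounded_op (fun X => subE (T X) (S X)).
Proof.
move=> [hT [K K0 nT]] [hS [L L0 nS]]; apply: (bounded_opP (addr_ge0 K0 L0)) => X hX.
have [hTS nTS] := l2e_subE (hT _ hX) (hS _ hX); split => //.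
by apply: le_trans nTS _; rewrite mulrDl; apply: lerD; [exact: nT | exact: nS].
Qed.

Lemma bounded_op_PiLeE M : bounded_op (PiLeE M).
Proof. by apply: (bounded_opP ler01) => X /(l2e_PiLeE M); rewrite mul1r. Qed.

Lemma bounded_op_PiGtE M : bounded_op (PiGtE M).
Proof. by apply: (bounded_opP ler01) => X /(l2e_PiGtE M); rewrite mul1r. Qed.

Definition linear_op T : Prop :=
  forall (a : R) X Y, T (addE (scaleE a X) Y) = addE (scaleE a (T X)) (T Y).

Lemma linear_op0 T X : linear_op T -> X = scaleE 0 X -> T X = scaleE 0 (T X).
Proof.
move=> hT X0; have := hT (-1) X X.
have -> : addE (scaleE (-1) X) X = X.
  by rewrite [in RHS]X0; apply: sq2_ext => n /=; rewrite mulN1r addNr mul0r.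
by move->; apply: sq2_ext => n /=; rewrite mulN1r addNr mul0r.
Qed.

Lemma linear_opZ T (a : R) X : linear_op T -> T (scaleE a X) = scaleE a (T X).
Proof.
move=> hT; have := hT a X (scaleE 0 X).
have -> : addE (scaleE a X) (scaleE 0 X) = scaleE a X.
  by apply: sq2_ext => n /=; rewrite mul0r addr0.
move->; rewrite (linear_op0 hT (X := scaleE 0 X)); last first.
  by apply: sq2_ext => n /=; rewrite !mul0r.
by apply: sq2_ext => n /=; rewrite mul0r addr0.
Qed.

Lemma linear_opD T X Y : linear_op T -> T (addE X Y) = addE (T X) (T Y).
Proof.
have e1 (Z : sq2 R) : scaleE 1 Z = Z by apply: sq2_ext => n /=; rewrite mul1r.
by move=> hT; have := hT 1 X Y; rewrite !e1.
Qed.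

Lemma linear_op_id : linear_op id.
Proof. by []. Qed.

Lemma linear_op_comp T S : linear_op T -> linear_op S -> linear_op (T \o S).
Proof. by move=> hT hS a X Y /=; rewrite hS hT. Qed.

Lemma linear_op_addE T S : linear_op T -> linear_op S -> linear_op (fun X => addE (T X) (S X)).
Proof. by move=> hT hS a X Y; rewrite hT hS; apply: sq2_ext => n /=; ring. Qed.

Lemma linear_op_subE T S : linear_op T -> linear_op S -> linear_op (fun X => subE (T X) (S X)).
Proof. by move=> hT hS a X Y; rewrite hT hS; apply: sq2_ext => n /=; ring. Qed.

Lemma linear_op_PiLeE M : linear_op (PiLeE M).
Proof. by move=> a X Y; apply: sq2_ext => n /=; rewrite /PiLe; case: ifP; rewrite ?mulr0 ?addr0. Qed.

Lemma linear_op_PiGtE M : linear_op (PiGtE M).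
Proof. by move=> a X Y; apply: sq2_ext => n /=; rewrite /PiGt; case: ifP; rewrite ?mulr0 ?addr0. Qed.

Lemma opnorm_le T W : bounded_op T -> linear_op T -> in_l2e W ->
  norm2e (T W) <= opnorm T * norm2e W.
Proof.
move=> [hT [K K0 nT]] linT hW.
have [h0 n0] := l2e_scaleE 0 hW; rewrite normr0 mul0r in n0.
have supT : has_sup [set norm2e (T X) | X in [set X | in_l2e X /\ norm2e X <= 1]].
  split; first by exists (norm2e (T (scaleE 0 W))), (scaleE 0 W); split => //; lra.
  exists K => _ [X [hX nX] <-]; apply: le_trans (nT _ hX) _.
  by rewrite -[leRHS]mulr1 ler_wpM2l.
have le_opnorm X : in_l2e X -> norm2e X <= 1 -> norm2e (T X) <= opnorm T.
  by move=> hX nX; apply: sup_upper_bound => //; exists X.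
have [W0|W0] := eqVneq (norm2e W) 0.
  by rewrite W0 mulr0; apply: le_trans (nT _ hW) _; rewrite W0 mulr0.
have c0 : 0 < norm2e W by rewrite lt_def W0 norm2e_ge0.
have eW : W = scaleE (norm2e W) (scaleE (norm2e W)^-1 W).
  by apply: sq2_ext => n /=; rewrite mulrA divff // mul1r.
have [hX nX] := l2e_scaleE (norm2e W)^-1 hW.
rewrite ger0_norm ?invr_ge0 ?norm2e_ge0 // mulVf // in nX.
have [_ nTW] := l2e_scaleE (norm2e W) (hT _ hX).
rewrite [X in T X]eW linear_opZ //; apply: le_trans nTW _.
rewrite ger0_norm ?norm2e_ge0 // [leLHS]mulrC.
by apply: ler_wpM2r; [exact: norm2e_ge0 | exact: le_opnorm].
Qed.

End Operators.

Section Convolution.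
Variable R : realType.
Implicit Types (U V : sq R).

Definition supported_le (N : nat) V : Prop := forall k, (N < k)%N -> V k = 0.

Lemma rsum_finite (f : nat -> R) K : (forall k, (K <= k)%N -> f k = 0) ->
  rsum f = \sum_(k < K) f k.
Proof.
move=> f0; apply: cvg_lim => //; apply: cvg_near_cst; exists K => // n /= Kn.
rewrite /series /= (big_cat_nat _ Kn) //= big_mkord [X in _ + X]big_nat_cond.
by rewrite [X in _ + X]big1 ?addr0 // => k /andP[/andP[Kk _] _]; exact: f0.
Qed.

Lemma norm1_supported N V : supported_le N V ->
  norm1 V = `|V 0%N| + \sum_(k < N) 2 * `|V k.+1|.
Proof.
move=> hV; rewrite /norm1 (@rsum_finite _ N.+1) ?big_ord_recl /= ?mul1r //.
by move=> k Nk; rewrite hV ?normr0 ?mulr0.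
Qed.

Lemma norm1_supported_ge0 N V : supported_le N V -> 0 <= norm1 V.
Proof.
by move=> /norm1_supported ->; rewrite addr_ge0 ?sumr_ge0 // => k _; rewrite mulr_ge0.
Qed.

Lemma conv_supported N V U n : supported_le N V ->
  Defs.conv V U n = V 0%N * U n + \sum_(k < N) V k.+1 * (U (distn n k.+1) + U (n + k.+1)%N).
Proof.
move=> hV; rewrite /Defs.conv (@rsum_finite _ N.+1) => [|k Nk]; last by rewrite hV ?mul0r.
rewrite (@rsum_finite _ N) => [|k Nk]; last by rewrite hV ?mul0r.
rewrite big_ord_recl /= /distn subn0 addn0 -addrA -big_split /=.
by congr (_ + _); apply: eq_bigr => k _; rewrite mulrDr.
Qed.

Definition alphan (n : nat) : nat := if n == 0%N then 1 else 2.

Lemma alpha_natE n : alpha R n = (alphan n)%:R.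
Proof. by rewrite /alpha /alphan; case: eqP. Qed.

(* A coefficient u_m enters sum_n alpha_n (u_{|n-K|}^2 + u_{n+K}^2) only through
   n = K + m, n = K - m (if 0 < m <= K) and n = m - K (if K < m). *)
Lemma shift_multiplicity_le K m n : (0 < K)%N ->
  (alphan n * ((m == distn n K) + (m == n + K))
   <= 2 * ((n == K + m) + ((0 < m <= K) && (n == K - m)) + ((K < m) && (n == m - K))))%N.
Proof.
move=> K0; rewrite /alphan /distn.
case: (eqVneq n 0%N) => h0; case: (eqVneq m ((n - K) + (K - n))%N) => h1;
case: (eqVneq m (n + K)%N) => h2; case: (eqVneq n (K + m)%N) => h3;
case: (eqVneq n (K - m)%N) => h5; case: (eqVneq n (m - K)%N) => h7;
case: (ltnP 0 m) => h8; case: (leqP m K) => h9; rewrite /= ?muln0 ?muln1; lia.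
Qed.

Lemma sum_ord_eqn_le (P : bool) M a : (\sum_(n < M) (P && ((n : nat) == a)) <= P)%N.
Proof.
under eq_bigr do rewrite -mulnb.
rewrite -big_distrr /= -[X in (_ <= X)%N]muln1 leq_mul2l; apply/orP; right.
case: (ltnP a M) => aM.
  rewrite (bigD1 (Ordinal aM)) //= eqxx big1 // => i ne.
  by case: eqP => // ia; case/eqP: ne; apply: val_inj.
by rewrite big1 // => i _; case: eqP => // ia; move: (ltn_ord i); rewrite ia ltnNge aM.
Qed.

Lemma shift_coef_le K M m : (0 < K)%N ->
  (\sum_(n < M) alphan n * ((m == distn n K) + (m == n + K)) <= 2 * alphan m)%N.
Proof.
move=> K0; apply: leq_trans.
  by apply: leq_sum => n _; exact: shift_multiplicity_le.
rewrite -big_distrr /= leq_pmul2l // !big_split /=.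
have h1 := @sum_ord_eqn_le true M (K + m)%N.
have h2 := @sum_ord_eqn_le (0 < m <= K)%N M (K - m)%N.
have h3 := @sum_ord_eqn_le (K < m)%N M (m - K)%N.
rewrite /alphan; case: m h1 h2 h3 => [|m] /=; first lia.
by case: (leqP m.+1 K) => /=; lia.
Qed.

Lemma pick_sum (L a : nat) (F : nat -> R) : (a < L)%N ->
  \sum_(m < L) (((m : nat) == a)%:R * F m) = F a.
Proof.
move=> aL; rewrite (bigD1 (Ordinal aL)) //= eqxx mul1r big1 ?addr0 // => m ne.
by case: eqP => [ma|]; [case/eqP: ne; apply: val_inj | rewrite mul0r].
Qed.

Lemma sqsum_shift_le U K M : (0 < K)%N ->
  \sum_(n < M) alpha R n * (U (distn n K) ^+ 2 + U (n + K)%N ^+ 2) <= 2 * sqsum U (M + K).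
Proof.
move=> K0; set L := (M + K)%N.
have expand (n : 'I_M) : alpha R n * (U (distn n K) ^+ 2 + U (n + K)%N ^+ 2) =
    \sum_(m < L) alpha R n * (((m : nat) == distn n K)%:R + ((m : nat) == (n + K)%N)%:R)
      * U m ^+ 2.
  have nM := ltn_ord n.
  rewrite -(@pick_sum L (distn n K) (fun m => U m ^+ 2)); last by rewrite /L /distn; lia.
  rewrite -(@pick_sum L (n + K)%N (fun m => U m ^+ 2)) /L; last by lia.
  by rewrite -big_split mulr_sumr; apply: eq_bigr => m _ /=; ring.
rewrite (eq_bigr _ (fun n _ => expand n)) exchange_big /sqsum mulr_sumr.
apply: ler_sum => m _; rewrite -mulr_suml mulrA ler_wpM2r ?sqr_ge0 //.
rewrite alpha_natE -natrM (_ : \sum_(n < M) _ = (\sum_(n < M)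
    alphan n * (((m : nat) == distn n K) + ((m : nat) == n + K)))%N%:R).
  by rewrite ler_nat shift_coef_le.
by rewrite natr_sum; apply: eq_bigr => n _; rewrite alpha_natE natrM natrD.
Qed.

Lemma conv_sqr_le N V U n : supported_le N V ->
  Defs.conv V U n ^+ 2 <= norm1 V * (`|V 0%N| * U n ^+ 2 +
    \sum_(k < N) `|V k.+1| * (U (distn n k.+1) ^+ 2 + U (n + k.+1)%N ^+ 2)).
Proof.
move=> hV; rewrite (conv_supported _ _ hV) (norm1_supported hV).
apply: cauchy_schwarz_step.
- exact: normr_ge0.
- by rewrite mulr_ge0 ?sqr_ge0.
- by apply: sumr_ge0 => k _; rewrite mulr_ge0.
- by apply: sumr_ge0 => k _; rewrite mulr_ge0 ?addr_ge0 ?sqr_ge0.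
- by rewrite mulrA -expr2 real_normK ?num_real // exprMn.
apply: (@cauchy_schwarz_sum R N (fun k => V k.+1 * (U (distn n k.+1) + U (n + k.+1)%N))
  (fun k => 2 * `|V k.+1|) (fun k => `|V k.+1| * (U (distn n k.+1) ^+ 2 + U (n + k.+1)%N ^+ 2)))
  => k; rewrite ?mulr_ge0 ?addr_ge0 ?sqr_ge0 //.
set y := U (distn n k.+1); set z := U (n + k.+1)%N.
rewrite [leRHS](_ : _ = `|V k.+1| ^+ 2 * (2 * (y ^+ 2 + z ^+ 2))); last by ring.
rewrite exprMn real_normK ?num_real //; apply: ler_wpM2l; rewrite ?sqr_ge0 // -subr_ge0.
by rewrite (_ : _ - _ = (y - z) ^+ 2) ?sqr_ge0 //; ring.
Qed.

Lemma l2_conv N V U : supported_le N V -> in_l2 U ->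
  in_l2 (Defs.conv V U) /\ norm2 (Defs.conv V U) <= norm1 V * norm2 U.
Proof.
move=> hV hU; have n1V := norm1_supported_ge0 hV.
apply: l2_sqsum_le => [|M]; first by rewrite mulr_ge0 ?norm2_ge0.
set Q := fun n => `|V 0%N| * U n ^+ 2 +
  \sum_(k < N) `|V k.+1| * (U (distn n k.+1) ^+ 2 + U (n + k.+1)%N ^+ 2).
have hQ : \sum_(n < M) alpha R n * Q n <= norm1 V * norm2 U ^+ 2.
  rewrite (_ : \sum_(n < M) _ = `|V 0%N| * sqsum U M + \sum_(k < N) `|V k.+1| *
      \sum_(n < M) alpha R n * (U (distn n k.+1) ^+ 2 + U (n + k.+1)%N ^+ 2)); last first.
    rewrite /Q /sqsum mulr_sumr; under eq_bigr do rewrite mulrDr mulr_sumr.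
    rewrite big_split /= exchange_big /=; congr (_ + _); first by apply: eq_bigr => n _; ring.
    by apply: eq_bigr => k _; rewrite mulr_sumr; apply: eq_bigr => n _; ring.
  rewrite (norm1_supported hV) mulrDl mulr_suml; apply: lerD.
    by apply: ler_wpM2l; [exact: normr_ge0 | exact: sqsum_le_norm2].
  apply: ler_sum => k _; rewrite [leRHS](_ : _ = `|V k.+1| * (2 * norm2 U ^+ 2)); last by ring.
  apply: ler_wpM2l => //.
  apply: le_trans (sqsum_shift_le U M (ltn0Sn k)) _.
  by apply: ler_wpM2l => //; exact: sqsum_le_norm2.
apply: le_trans (_ : _ <= norm1 V * \sum_(n < M) alpha R n * Q n) _.
  rewrite /sqsum mulr_sumr; apply: ler_sum => n _; rewrite [leRHS]mulrCA.
  by apply: ler_wpM2l; [exact: alpha_ge0 | exact: conv_sqr_le].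
rewrite (_ : (norm1 V * norm2 U) ^+ 2 = norm1 V * (norm1 V * norm2 U ^+ 2)); last by ring.
exact: ler_wpM2l.
Qed.

Lemma conv_linear N V (a : R) U U' n : supported_le N V ->
  Defs.conv V (fun m => a * U m + U' m) n = a * Defs.conv V U n + Defs.conv V U' n.
Proof.
move=> hV; rewrite !(conv_supported _ _ hV) (_ : \sum_(k < N) _ =
    a * \sum_(k < N) V k.+1 * (U (distn n k.+1) + U (n + k.+1)%N) +
    \sum_(k < N) V k.+1 * (U' (distn n k.+1) + U' (n + k.+1)%N)); first by ring.
by rewrite !mulr_sumr -big_split; apply: eq_bigr => k _ /=; ring.
Qed.

Lemma conv_eq0_high N M V U n : supported_le N V -> supported_le M U -> (N + M < n)%N ->
  Defs.conv V U n = 0.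
Proof.
move=> hV hU nNM; rewrite (conv_supported _ _ hV) hU ?mulr0 ?add0r; last lia.
by rewrite big1 // => k _; rewrite !hU ?addr0 ?mulr0 //; have := ltn_ord k; rewrite /distn; lia.
Qed.

Lemma conv_eq0_low N V U n : supported_le N V -> (forall m, (m <= 2 * N)%N -> U m = 0) ->
  (n <= N)%N -> Defs.conv V U n = 0.
Proof.
move=> hV hU nN; rewrite (conv_supported _ _ hV) hU ?mulr0 ?add0r; last lia.
by rewrite big1 // => k _; rewrite !hU ?addr0 ?mulr0 //; have := ltn_ord k; rewrite /distn; lia.
Qed.

End Convolution.

Section SymbolRatios.
Variables (R : realType) (d nu nu1 nu2 nu3 : R).
Hypotheses (d_gt0 : 0 < d) (nu_gt0 : 0 < nu).

Local Notation den := (lden nu nu1 nu2 nu3).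
(* Beyond this value of (2 pi xi)^2 the lower-order terms of [lden] are at most half of
   its leading term nu (2 pi xi)^4. *)
Local Notation threshold := (1 + 2 * (`|nu * nu2 - nu1| + `|nu1 * nu2 + nu2 * nu3|) / nu).

Lemma threshold_ge1 : 1 <= threshold.
Proof. by rewrite lerDl divr_ge0 ?mulr_ge0 ?addr_ge0 // ltW. Qed.

Lemma lden_ge (xi : R) : threshold <= (2 * pi * xi) ^+ 2 ->
  nu * ((2 * pi * xi) ^+ 2) ^+ 2 / 2 <= den xi.
Proof.
set X := (2 * pi * xi) ^+ 2 => hX; have X1 : 1 <= X := le_trans threshold_ge1 hX.
set c1 := `|nu * nu2 - nu1|; set c0 := `|nu1 * nu2 + nu2 * nu3|.
have eden : den xi = nu * X ^+ 2 + (nu * nu2 - nu1) * X - (nu1 * nu2 + nu2 * nu3).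
  by rewrite /lden /l11 /l22 /l12 /l21 -/X; ring.
have h1 : - (c1 * X) <= (nu * nu2 - nu1) * X.
  rewrite -mulNr; apply: ler_wpM2r; first exact: le_trans ler01 X1.
  by have := ler_norm (- (nu * nu2 - nu1)); rewrite normrN -/c1; lra.
have h0 : nu1 * nu2 + nu2 * nu3 <= c0 * X.
  by apply: le_trans (ler_norm _) _; rewrite -[leLHS]mulr1 ler_wpM2l.
have hc : (c1 + c0) * X <= nu * X ^+ 2 / 2.
  rewrite (_ : nu * X ^+ 2 / 2 = (nu / 2 * X) * X); last by ring.
  rewrite ler_wpM2r ?(le_trans ler01 X1) //.
  rewrite -(ler_pM2l (_ : 0 < 2 / nu)) ?divr_gt0 // mulrA (_ : 2 / nu * (nu / 2) = 1).
    by rewrite mul1r; apply: le_trans hX; rewrite mulrAC lerDr.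
  by field; rewrite gt_eqF.
by rewrite eden; lra.
Qed.

Lemma symbol_ratio_le_far (a b xi : R) : threshold <= (2 * pi * xi) ^+ 2 ->
  `|(a * (2 * pi * xi) ^+ 2 + b) / den xi| <= 2 * (`|a| + `|b|) / nu.
Proof.
move=> hX; have hden := lden_ge hX; move: hX hden.
set X := (2 * pi * xi) ^+ 2 => hX hden; have X1 : 1 <= X := le_trans threshold_ge1 hX.
have X_gt0 : 0 < X by lra.
have den0 : 0 < den xi.
  by apply: lt_le_trans _ hden; apply: divr_gt0 => //; apply: mulr_gt0 => //; exact: exprn_gt0.
rewrite normf_div (gtr0_norm den0) ler_pdivrMr //.
have hnum : `|a * X + b| <= (`|a| + `|b|) * X ^+ 2.
  apply: le_trans (ler_normD _ _) _; rewrite normrM (ger0_norm (le_trans ler01 X1)).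
  have XX : X <= X ^+ 2 by rewrite expr2 ler_peMl //; lra.
  have := normr_ge0 a; have := normr_ge0 b; nra.
apply: le_trans hnum _; apply: le_trans (_ : _ <= 2 * (`|a| + `|b|) / nu * (nu * X ^+ 2 / 2)) _.
  by rewrite le_eqVlt (_ : _ == _) //; apply/eqP; field; rewrite gt_eqF.
by rewrite ler_wpM2l // divr_ge0 ?mulr_ge0 ?addr_ge0 // ltW.
Qed.

Lemma bounded_of_eventually (f : nat -> R) K (G : R) :
  (forall n, (K <= n)%N -> `|f n| <= G) -> exists G', forall n, `|f n| <= G'.
Proof.
move=> hG; exists (\sum_(i < K) `|f i| + `|G|) => n.
have S0 : 0 <= \sum_(i < K) `|f i| by apply: sumr_ge0.
case: (ltnP n K) => nK.
  apply: le_trans (_ : _ <= \sum_(i < K) `|f i|) _; last by rewrite lerDl.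
  by rewrite (bigD1 (Ordinal nK)) //= lerDl sumr_ge0.
by apply: le_trans (hG n nK) _; apply: le_trans (ler_norm G) _; rewrite lerDr.
Qed.

Lemma symbol_ratio_bounded (num : R -> R) (a b : R) :
  (forall xi, num xi = a * (2 * pi * xi) ^+ 2 + b) ->
  exists G, forall n : nat, `|num (tl d n) / den (tl d n)| <= G.
Proof.
move=> hnum.
apply: (@bounded_of_eventually _ (Num.truncn (d * threshold)).+1 (2 * (`|a| + `|b|) / nu)) => n hn. rewrite hnum; apply: symbol_ratio_le_far.
have hy : threshold <= n%:R / d.
  rewrite ler_pdivlMr // mulrC; apply: le_trans (ltW (truncnS_gt (d * threshold))) _.
  by rewrite ler_nat.
have e : 2 * pi * tl d n = pi * (n%:R / d) by rewrite /tl; field; rewrite gt_eqF.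
rewrite e; set y := n%:R / d in hy *; have y1 : 1 <= y := le_trans threshold_ge1 hy.
have pi1 : 1 <= pi :> R by have := pi_ge2 R; lra.
have z1 : 1 <= pi * y by nra.
apply: le_trans hy _; apply: le_trans (_ : y <= pi * y) _; first nra.
nra.
Qed.

Lemma symbol_ratios_bounded : exists G,
  [/\ forall n : nat, `|l11 nu nu1 (tl d n) / den (tl d n)| <= G,
      forall n : nat, `|l12 nu2 (tl d n) / den (tl d n)| <= G,
      forall n : nat, `|l21 nu3 (tl d n) / den (tl d n)| <= G &
      forall n : nat, `|l22 nu2 (tl d n) / den (tl d n)| <= G].
Proof.
have [G11 h11] := @symbol_ratio_bounded (l11 nu nu1) (- nu) nu1 (fun xi => erefl).
have [G12 h12] : exists G, forall n : nat, `|l12 nu2 (tl d n) / den (tl d n)| <= G.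
  by apply: (@symbol_ratio_bounded _ 0 nu2) => xi; rewrite mul0r add0r.
have [G21 h21] : exists G, forall n : nat, `|l21 nu3 (tl d n) / den (tl d n)| <= G.
  by apply: (@symbol_ratio_bounded _ 0 nu3) => xi; rewrite mul0r add0r.
have [G22 h22] : exists G, forall n : nat, `|l22 nu2 (tl d n) / den (tl d n)| <= G.
  by apply: (@symbol_ratio_bounded _ (-1) (- nu2)) => xi; rewrite /l22 mulN1r.
exists (`|G11| + `|G12| + `|G21| + `|G22|).
have := (ler_norm G11, ler_norm G12, ler_norm G21, ler_norm G22).
have := (normr_ge0 G11, normr_ge0 G12, normr_ge0 G21, normr_ge0 G22).
move=> [[[p1 p2] p3] p4] [[[u1 u2] u3] u4].
by split=> n; [move: (h11 n) | move: (h12 n) | move: (h21 n) | move: (h22 n)]; lra.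
Qed.

Lemma supq_ge (N : nat) (f : R -> R) : (exists G, forall n : nat, `|f (tl d n)| <= G) ->
  0 <= supq d N f /\ forall n : nat, (2 * N < n)%N -> `|f (tl d n)| <= supq d N f.
Proof.
move=> [G hG]; have hS : has_sup [set `|f (tl d n)| | n in [set n : nat | (2 * N < n)%N]].
  split; first by exists `|f (tl d (2 * N).+1)|; exists (2 * N).+1 => /=.
  by exists G => _ [n _ <-].
have ub n : (2 * N < n)%N -> `|f (tl d n)| <= supq d N f.
  by move=> nN; apply: sup_upper_bound => //; exists n.
by split => //; exact: le_trans (normr_ge0 _) (ub _ (ltnSn _)).
Qed.

End SymbolRatios.

Section Residual.
Variables (R : realType) (d nu nu1 nu2 nu3 : R) (N : nat) (V1 V2 : sq R).
Variable BN : sq2 R -> sq2 R.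
Hypotheses (V1_supp : supported_le N V1) (V2_supp : supported_le N V2).
Hypothesis BN_linear : linear_op BN.
Hypothesis BN_supp : forall W, BN W = PiLeE N (BN (PiLeE N W)).

Local Notation Dgl X := (DgN V1 V2 (linv d nu nu1 nu2 nu3 X)).
Local Notation A X := (Bop N BN (addE X (Dgl X))).
Local Notation Z0op X := (subE (PiLeE (2 * N) X) (PiLeE (3 * N) (A (PiLeE (2 * N) X)))).

Lemma linear_op_linv : linear_op (linv d nu nu1 nu2 nu3).
Proof. by move=> a X Y; apply: sq2_ext => n; rewrite /linv /=; ring. Qed.

Lemma linear_op_DgN : linear_op (DgN V1 V2).
Proof.
move=> a X Y; apply: sq2_ext => n /=;
  by rewrite (conv_linear _ _ _ _ V1_supp) (conv_linear _ _ _ _ V2_supp); ring.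
Qed.

Lemma linear_op_A : linear_op (fun X => A X).
Proof.
have hB : linear_op (fun Y => addE (PiGtE N Y) (BN Y)).
  exact: linear_op_addE (linear_op_PiGtE N) BN_linear.
have hF : linear_op (fun X => addE X (Dgl X)).
  exact: linear_op_addE (@linear_op_id R) (linear_op_comp linear_op_DgN linear_op_linv).
exact: linear_op_comp hB hF.
Qed.

Lemma linear_op_Z0op : linear_op (fun X => Z0op X).
Proof.
have hA : linear_op (fun X => PiLeE (3 * N) (A (PiLeE (2 * N) X))).
  exact: linear_op_comp (linear_op_PiLeE _) (linear_op_comp linear_op_A (linear_op_PiLeE _)).
exact: linear_op_subE (linear_op_PiLeE _) hA.
Qed.

Lemma BN_eq0_high Y n : (N < n)%N -> (BN Y).1 n = 0 /\ (BN Y).2 n = 0.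
Proof. by move=> nN; rewrite BN_supp /= /PiLe leqNgt nN. Qed.

Lemma BN_eq0_low Y : (forall n, (n <= N)%N -> Y.1 n = 0 /\ Y.2 n = 0) ->
  forall n, (BN Y).1 n = 0 /\ (BN Y).2 n = 0.
Proof.
move=> hY n; rewrite BN_supp (_ : PiLeE N Y = scaleE 0 Y).
  by rewrite linear_opZ //= /PiLe !mul0r; case: ifP.
by apply: sq2_ext => m /=; rewrite /PiLe mul0r; case: ifP => // /hY [].
Qed.

Lemma linv_eq0 X n : X.1 n = 0 -> X.2 n = 0 ->
  (linv d nu nu1 nu2 nu3 X).1 n = 0 /\ (linv d nu nu1 nu2 nu3 X).2 n = 0.
Proof. by move=> h1 h2; rewrite /linv /= h1 h2 !mulr0 subrr addr0 !mul0r. Qed.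

Lemma Dgl_tail_eq0_low W n : (n <= N)%N ->
  (Dgl (PiGtE (2 * N) W)).1 n = 0 /\ (Dgl (PiGtE (2 * N) W)).2 n = 0.
Proof.
have hL m : (m <= 2 * N)%N -> (linv d nu nu1 nu2 nu3 (PiGtE (2 * N) W)).1 m = 0 /\
    (linv d nu nu1 nu2 nu3 (PiGtE (2 * N) W)).2 m = 0.
  by move=> mN; apply: linv_eq0; rewrite /= /PiGt ltnNge mN.
move=> nN; rewrite /= (conv_eq0_low V1_supp _ nN) ?(conv_eq0_low V2_supp _ nN).
- by rewrite addr0 oppr0.
- by move=> m /hL [].
- by move=> m /hL [].
Qed.

Lemma Dgl_head_eq0_high W n : (3 * N < n)%N ->
  (Dgl (PiLeE (2 * N) W)).1 n = 0 /\ (Dgl (PiLeE (2 * N) W)).2 n = 0.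
Proof.
have hL m : (2 * N < m)%N -> (linv d nu nu1 nu2 nu3 (PiLeE (2 * N) W)).1 m = 0 /\
    (linv d nu nu1 nu2 nu3 (PiLeE (2 * N) W)).2 m = 0.
  by move=> mN; apply: linv_eq0; rewrite /= /PiLe leqNgt mN.
move=> nN; have nN' : (N + 2 * N < n)%N by lia.
rewrite /= (conv_eq0_high V1_supp _ nN') ?(conv_eq0_high V2_supp _ nN').
- by rewrite addr0 oppr0.
- by move=> m /hL [].
- by move=> m /hL [].
Qed.

Lemma residual_split W : subE W (A W) = subE (Z0op W) (Dgl (PiGtE (2 * N) W)).
Proof.
have D2 := Dgl_tail_eq0_low W; have D1 := Dgl_head_eq0_high W.
set x1 := PiLeE (2 * N) W in D1 *; set x2 := PiGtE (2 * N) W in D2 *.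
have x1_high n : (2 * N < n)%N -> x1.1 n = 0 /\ x1.2 n = 0.
  by move=> nN; rewrite /x1 /= /PiLe leqNgt nN.
have x2_low n : (n <= 2 * N)%N -> x2.1 n = 0 /\ x2.2 n = 0.
  by move=> nN; rewrite /x2 /= /PiGt ltnNge nN.
have eW : W = addE x1 x2.
  by apply: sq2_ext => n /=; rewrite /PiLe /PiGt ltnNge; case: ifP; rewrite ?addr0 ?add0r.
have linDgl : linear_op (fun X => Dgl X) := linear_op_comp linear_op_DgN linear_op_linv.
set Y1 := addE x1 (Dgl x1); set Y2 := addE x2 (Dgl x2).
have eY : addE W (Dgl W) = addE Y1 Y2.
  rewrite [in Dgl W]eW (linear_opD _ _ linDgl) {1}eW.
  by apply: sq2_ext => n /=; ring.
have BY1 := BN_eq0_high Y1.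
have BY2 : forall n, (BN Y2).1 n = 0 /\ (BN Y2).2 n = 0.
  apply: BN_eq0_low => m mN; have [d1 d2] := D2 m mN.
  have [e1 e2] : x2.1 m = 0 /\ x2.2 m = 0 by apply: x2_low; lia.
  by change (x2.1 m + (Dgl x2).1 m = 0 /\ x2.2 m + (Dgl x2).2 m = 0); rewrite e1 e2 d1 d2 addr0.
rewrite /Bop eY (linear_opD _ _ BN_linear) {1}eW.
apply: sq2_extP => n; cbn [fst snd addE subE PiLeE PiGtE]; rewrite /PiGt /PiLe.
have [b1 b2] := BY2 n; rewrite b1 b2; have [nN|Nn] := leqP n N.
  have [e1 e2] : x2.1 n = 0 /\ x2.2 n = 0 by apply: x2_low; lia.
  have [d1 d2] := D2 n nN.
  by rewrite (_ : n <= 3 * N)%N ?e1 ?e2 ?d1 ?d2; [split; ring | lia].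
have [y11 y12] : Y1.1 n = x1.1 n + (Dgl x1).1 n /\ Y1.2 n = x1.2 n + (Dgl x1).2 n by [].
have [y21 y22] : Y2.1 n = x2.1 n + (Dgl x2).1 n /\ Y2.2 n = x2.2 n + (Dgl x2).2 n by [].
have [c1 c2] := BY1 n Nn; rewrite c1 c2 y11 y12 y21 y22.
have [n3|n3] := leqP n (3 * N); first by split; ring.
have [e1 e2] : x1.1 n = 0 /\ x1.2 n = 0 by apply: x1_high; lia.
by have [d1 d2] := D1 n n3; rewrite e1 e2 d1 d2; split; ring.
Qed.


Local Notation ratio f n := (f (tl d n) / lden nu nu1 nu2 nu3 (tl d n)).

Lemma linv_abs_le X n :
  `|(linv d nu nu1 nu2 nu3 X).1 n| <=
    `|ratio (l22 nu2) n| * `|X.1 n| + `|ratio (l12 nu2) n| * `|X.2 n| /\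
  `|(linv d nu nu1 nu2 nu3 X).2 n| <=
    `|ratio (l21 nu3) n| * `|X.1 n| + `|ratio (l11 nu nu1) n| * `|X.2 n|.
Proof.
have -> : (linv d nu nu1 nu2 nu3 X).1 n =
    ratio (l22 nu2) n * X.1 n - ratio (l12 nu2) n * X.2 n by rewrite /linv /=; ring.
have -> : (linv d nu nu1 nu2 nu3 X).2 n =
    ratio (l11 nu nu1) n * X.2 n - ratio (l21 nu3) n * X.1 n by rewrite /linv /=; ring.
by rewrite -!normrM; split; [|rewrite [leRHS]addrC]; apply: ler_normB.
Qed.

Lemma l2e_DgN L : in_l2e L -> in_l2e (DgN V1 V2 L) /\
  norm2e (DgN V1 V2 L) <= Num.sqrt 2 * (norm1 V1 * norm2 L.1 + norm1 V2 * norm2 L.2).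
Proof.
move=> [hL1 hL2]; have [c1 n1] := l2_conv V1_supp hL1; have [c2 n2] := l2_conv V2_supp hL2.
set c := norm1 V1 * norm2 L.1 + norm1 V2 * norm2 L.2.
have hc (Z : sq R) : (forall n, `|Z n| <= 1 * `|Defs.conv V1 L.1 n| + 1 * `|Defs.conv V2 L.2 n|) ->
    in_l2 Z /\ norm2 Z <= c.
  move=> hZ; have [hZ' nZ] := l2_combination_le ler01 ler01 c1 c2 hZ; split => //.
  by apply: le_trans nZ _; rewrite !mul1r lerD.
have [h1 b1] : in_l2 (DgN V1 V2 L).1 /\ norm2 (DgN V1 V2 L).1 <= c.
  by apply: hc => n; rewrite !mul1r; apply: ler_normD.
have [h2 b2] : in_l2 (DgN V1 V2 L).2 /\ norm2 (DgN V1 V2 L).2 <= c.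
  by apply: hc => n; rewrite !mul1r /= normrN; apply: ler_normD.
by split; [split | apply: norm2e_le_sqrt2].
Qed.

Lemma bounded_op_DgN : bounded_op (DgN V1 V2).
Proof.
have n1 := norm1_supported_ge0 V1_supp; have n2 := norm1_supported_ge0 V2_supp.
apply: (@bounded_opP _ _ (Num.sqrt 2 * (norm1 V1 + norm1 V2))).
  by rewrite mulr_ge0 ?sqrtr_ge0 ?addr_ge0.
move=> L hL; have [hD nD] := l2e_DgN hL; split => //; apply: le_trans nD _.
rewrite -mulrA ler_wpM2l ?sqrtr_ge0 // mulrDl.
by have [a1 a2] := norm2_le_norm2e L; apply: lerD; apply: ler_wpM2l.
Qed.

Variable G : R.
Hypothesis ratio_bounded :
  [/\ forall n : nat, `|ratio (l11 nu nu1) n| <= G, forall n : nat, `|ratio (l12 nu2) n| <= G,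
      forall n : nat, `|ratio (l21 nu3) n| <= G & forall n : nat, `|ratio (l22 nu2) n| <= G].

Lemma bounded_op_linv : bounded_op (linv d nu nu1 nu2 nu3).
Proof.
have [g11 g12 g21 g22] := ratio_bounded.
have G0 : 0 <= G := le_trans (normr_ge0 _) (g11 0%N).
apply: (@bounded_opP _ _ (Num.sqrt 2 * (2 * G))); first by rewrite !mulr_ge0 ?sqrtr_ge0.
move=> X hX; have [hX1 hX2] := hX; have [a1 a2] := norm2_le_norm2e X.
have le2G (Z : sq R) : (forall n, `|Z n| <= G * `|X.1 n| + G * `|X.2 n|) ->
    in_l2 Z /\ norm2 Z <= 2 * G * norm2e X.
  move=> hZ; have [hZ' nZ] := l2_combination_le G0 G0 hX1 hX2 hZ; split => //.
  apply: le_trans nZ _; rewrite (_ : 2 * G * _ = G * norm2e X + G * norm2e X); last by ring.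
  by apply: lerD; apply: ler_wpM2l.
have [h1 b1] : in_l2 (linv d nu nu1 nu2 nu3 X).1 /\
    norm2 (linv d nu nu1 nu2 nu3 X).1 <= 2 * G * norm2e X.
  apply: le2G => n; apply: le_trans (linv_abs_le X n).1 _.
  by apply: lerD; apply: ler_wpM2r.
have [h2 b2] : in_l2 (linv d nu nu1 nu2 nu3 X).2 /\
    norm2 (linv d nu nu1 nu2 nu3 X).2 <= 2 * G * norm2e X.
  apply: le2G => n; apply: le_trans (linv_abs_le X n).2 _.
  by apply: lerD; apply: ler_wpM2r.
by split; [split | rewrite -mulrA; apply: norm2e_le_sqrt2].
Qed.

Hypothesis BN_bounded : bounded_op BN.

Lemma bounded_op_Z0op : bounded_op (fun X => Z0op X).
Proof.
have hD : bounded_op (fun X => Dgl X) := bounded_op_comp bounded_op_DgN bounded_op_linv.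
have hF : bounded_op (fun X => addE X (Dgl X)) := bounded_op_addE (@bounded_op_id R) hD.
have hB : bounded_op (fun Y => addE (PiGtE N Y) (BN Y)) :=
  bounded_op_addE (@bounded_op_PiGtE R N) BN_bounded.
have hA : bounded_op (fun X => A X) := bounded_op_comp hB hF.
have hA' : bounded_op (fun X => PiLeE (3 * N) (A (PiLeE (2 * N) X))) :=
  bounded_op_comp (@bounded_op_PiLeE R _) (bounded_op_comp hA (@bounded_op_PiLeE R _)).
exact: bounded_op_subE (@bounded_op_PiLeE R _) hA'.
Qed.

Variables q11 q12 q21 q22 : R.
Hypotheses (q11_ge0 : 0 <= q11) (q12_ge0 : 0 <= q12) (q21_ge0 : 0 <= q21) (q22_ge0 : 0 <= q22).
Hypothesis ratio_tail : forall n : nat, (2 * N < n)%N ->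
  [/\ `|ratio (l11 nu nu1) n| <= q11, `|ratio (l12 nu2) n| <= q12,
      `|ratio (l21 nu3) n| <= q21 & `|ratio (l22 nu2) n| <= q22].

Lemma l2e_Dgl_tail W : in_l2e W -> in_l2e (Dgl (PiGtE (2 * N) W)) /\
  norm2e (Dgl (PiGtE (2 * N) W)) <= Num.sqrt 2 *
    ((q22 * norm1 V1 + q21 * norm1 V2) * norm2 (PiGtE (2 * N) W).1 +
     (q12 * norm1 V1 + q11 * norm1 V2) * norm2 (PiGtE (2 * N) W).2).
Proof.
move=> hW; have [[h1 h2] _] := l2e_PiGtE (2 * N) hW.
set x2 := PiGtE (2 * N) W in h1 h2 *; set L := linv d nu nu1 nu2 nu3 x2.
have hL n : `|L.1 n| <= q22 * `|x2.1 n| + q12 * `|x2.2 n| /\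
            `|L.2 n| <= q21 * `|x2.1 n| + q11 * `|x2.2 n|.
  have [le1 le2] := linv_abs_le x2 n; have [nN|Nn] := leqP n (2 * N).
    have [e1 e2] : x2.1 n = 0 /\ x2.2 n = 0 by rewrite /x2 /= /PiGt ltnNge nN.
    by move: le1 le2; rewrite e1 e2 !normr0 !mulr0 !addr0.
  have [g11 g12 g21 g22] := ratio_tail Nn.
  by split; [apply: le_trans le1 _ | apply: le_trans le2 _]; apply: lerD; apply: ler_wpM2r.
have [hL1 nL1] := l2_combination_le q22_ge0 q12_ge0 h1 h2 (fun n => (hL n).1).
have [hL2 nL2] := l2_combination_le q21_ge0 q11_ge0 h1 h2 (fun n => (hL n).2).
have [hD nD] := l2e_DgN (conj hL1 hL2); split => //; apply: le_trans nD _.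
have n1 := norm1_supported_ge0 V1_supp; have n2 := norm1_supported_ge0 V2_supp.
rewrite ler_wpM2l ?sqrtr_ge0 //.
apply: le_trans (lerD (ler_wpM2l n1 nL1) (ler_wpM2l n2 nL2)) _.
by rewrite le_eqVlt (_ : _ == _) //; apply/eqP; ring.
Qed.

Lemma norm2e_residual_le W : in_l2e W ->
  norm2e (subE W (A W)) <= Num.sqrt (opnorm (fun X => Z0op X) ^+ 2
    + 2 * (q22 * norm1 V1 + q21 * norm1 V2) ^+ 2
    + 2 * (q12 * norm1 V1 + q11 * norm1 V2) ^+ 2) * norm2e W.
Proof.
move=> hW; have [hx1 _] := l2e_PiLeE (2 * N) hW; have [[hx21 hx22] _] := l2e_PiGtE (2 * N) hW.
have eT : Z0op W = Z0op (PiLeE (2 * N) W).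
  by congr (subE _ (PiLeE _ (A _))); apply: sq2_ext => n /=; rewrite /PiLe; case: ifP.
have nT := opnorm_le bounded_op_Z0op linear_op_Z0op hx1; rewrite -eT in nT.
have [hD nD] := l2e_Dgl_tail hW.
have [_ nS] := l2e_subE (bounded_op_Z0op.1 _ hW) hD.
rewrite residual_split; apply: le_trans nS _; apply: le_trans (lerD nT nD) _.
set Z11 := q22 * _ + _; set Z12 := q12 * _ + _.
have e11 : 2 * Z11 ^+ 2 = (Num.sqrt 2 * Z11) ^+ 2 by rewrite exprMn sqr_sqrtr.
have e12 : 2 * Z12 ^+ 2 = (Num.sqrt 2 * Z12) ^+ 2 by rewrite exprMn sqr_sqrtr.
have eW : norm2e W = Num.sqrt (norm2e (PiLeE (2 * N) W) ^+ 2
    + norm2 (PiGtE (2 * N) W).1 ^+ 2 + norm2 (PiGtE (2 * N) W).2 ^+ 2).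
  by rewrite -addrA -norm2e_sqr -(norm2e_PiLeE_PiGtE _ hW) sqrtr_sqr ger0_norm ?norm2e_ge0.
rewrite eW e11 e12.
apply: le_trans (cauchy_schwarz3 _ _ _ _ _ _).
by rewrite le_eqVlt (_ : _ == _) //; apply/eqP; ring.
Qed.

End Residual.

Unset Implicit Arguments.

Theorem lemma4p5 (R : realType) (d nu nu1 nu2 nu3 nu4 nu5 : R)
  (N0 N : nat) (Ub : sq2 R) (BN : sq2 R -> sq2 R) :
  1 <= d -> 0 < nu ->
  (forall xi : R, lden nu nu1 nu2 nu3 xi != 0) ->
  Ub = PiLeE N0 Ub ->
  (forall (a : R) (W W' : sq2 R), BN (addE (scaleE a W) W') = addE (scaleE a (BN W)) (BN W')) ->
  (forall W : sq2 R, in_l2e W -> in_l2e (BN W)) ->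
  (exists C : R, forall W : sq2 R, in_l2e W -> norm2e (BN W) <= C * norm2e W) ->
  (forall W : sq2 R, BN W = PiLeE N (BN (PiLeE N W))) ->
  let V1 := V1N d nu4 nu5 N Ub in
  let V2 := V2N d nu5 N Ub in
  let A := fun W : sq2 R =>
             Bop N BN (addE W (DgN V1 V2 (linv d nu nu1 nu2 nu3 W))) in
  let Z0 := opnorm (fun W : sq2 R =>
             subE (PiLeE (2 * N) W) (PiLeE (3 * N) (A (PiLeE (2 * N) W)))) in
  let q := fun f : R -> R => supq d N f in
  let Z11 := q (fun xi => l22 nu2 xi / lden nu nu1 nu2 nu3 xi) * norm1 V1
           + q (fun xi => l21 nu3 xi / lden nu nu1 nu2 nu3 xi) * norm1 V2 in
  let Z12 := q (fun xi => l12 nu2 xi / lden nu nu1 nu2 nu3 xi) * norm1 V1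
           + q (fun xi => l11 nu nu1 xi / lden nu nu1 nu2 nu3 xi) * norm1 V2 in
  let Z1 := Num.sqrt (Z0 ^+ 2 + 2 * Z11 ^+ 2 + 2 * Z12 ^+ 2) in
  forall W : sq2 R, in_l2e W -> norm2e (subE W (A W)) <= Z1 * norm2e W.
Proof.
move=> d1 nu0 _ _ BN_lin BN_l2 [C BN_C] BN_supp V1 V2 A Z0 q Z11 Z12 Z1 W hW.
have d0 : 0 < d by lra.
have V1_supp : supported_le N V1 by move=> k Nk; rewrite /V1 /V1N /PiLe leqNgt Nk.
have V2_supp : supported_le N V2 by move=> k Nk; rewrite /V2 /V2N /PiLe leqNgt Nk.
have BN_bnd : bounded_op BN.
  apply: (bounded_opP (normr_ge0 C)) => X hX; split; first exact: BN_l2.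
  by apply: le_trans (BN_C X hX) _; rewrite ler_wpM2r ?norm2e_ge0 ?ler_norm.
have [G hG] := symbol_ratios_bounded nu1 nu2 nu3 d0 nu0.
have tail f : (forall n : nat, `|f (tl d n)| <= G) ->
    0 <= q f /\ forall n : nat, (2 * N < n)%N -> `|f (tl d n)| <= q f.
  by move=> hf; apply: supq_ge; exists G.
have [h11 h12 h21 h22] := hG.
have [q11_0 q11] := tail (fun xi => l11 nu nu1 xi / lden nu nu1 nu2 nu3 xi) h11.
have [q12_0 q12] := tail (fun xi => l12 nu2 xi / lden nu nu1 nu2 nu3 xi) h12.
have [q21_0 q21] := tail (fun xi => l21 nu3 xi / lden nu nu1 nu2 nu3 xi) h21.
have [q22_0 q22] := tail (fun xi => l22 nu2 xi / lden nu nu1 nu2 nu3 xi) h22.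
apply: (norm2e_residual_le V1_supp V2_supp BN_lin BN_supp hG BN_bnd q11_0 q12_0 q21_0 q22_0) => //.
by move=> n nN; split; [exact: q11 | exact: q12 | exact: q21 | exact: q22].
Qed.
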